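(* Let $\mu_t,c_t\in(0,1)$ with $(\mu_t-c_t,\mu_t+c_t)\subset(0,1)$, let $\mu_t^*\in[0,1]$, let $\mathcal{A}$ be a set of actions, $a_t\in\mathcal{A}$, and $l_t:\mathcal{A}\times\{0,1\}\to\mathbb{R}$. Define $$L_t^{\max}=\max_{\tilde\mu\in[\mu_t-c_t,\mu_t+c_t]}\mathbb{E}_{Y\sim\mathrm{Bernoulli}(\tilde\mu)}[l_t(a_t,Y)],\qquad L_t^{\min}=\min_{\tilde\mu\in[\mu_t-c_t,\mu_t+c_t]}\mathbb{E}_{Y\sim\mathrm{Bernoulli}(\tilde\mu)}[l_t(a_t,Y)],$$ $L_t^*=\mathbb{E}_{Y\sim\mathrm{Bernoulli}(\mu_t^* )}[l_t(a_t,Y)]$, and for a stake $b_t\in\mathbb{R}$, $$L_t^{\mathrm{pay}}=L_t^*-\mathbb{E}_{Y\sim\mathrm{Bernoulli}(\mu_t^* )}\big[b_t(Y-\mu_t)+|b_t|c_t\big].$$ If $b_t=l_t(a_t,1)-l_t(a_t,0)$, then $L_t^{\mathrm{pay}}\in[L_t^{\min},L_t^{\max}]$. *)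

From HB Require Import structures.
From mathcomp Require Import all_boot all_order all_algebra.
From mathcomp Require Import all_classical all_reals.
Set Implicit Arguments. Unset Strict Implicit. Unset Printing Implicit Defensive.
Import Order.TTheory GRing.Theory Num.Theory.
Local Open Scope ring_scope.
Local Open Scope classical_set_scope.

(* E_{Y ~ Bernoulli(mu)} [f Y], with Y in {0,1} encoded as bool (true = 1). *)
Definition bernE {R : realType} (mu : R) (f : bool -> R) : R :=
  (1 - mu) * f false + mu * f true.

Definition conf_int {R : realType} (mu c : R) : set R :=
  [set m | mu - c <= m <= mu + c].

(* L^max: max over mu~ in [mu-c, mu+c] of E_{Bern(mu~)}[l(a,Y)]
   (the max is attained since the map is affine; we use sup). *)
Definition Lmax {R : realType} {A : Type} (l : A -> bool -> R) (a : A) (mu c : R) : R :=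
  sup [set bernE m (l a) | m in conf_int mu c].

Definition Lmin {R : realType} {A : Type} (l : A -> bool -> R) (a : A) (mu c : R) : R :=
  inf [set bernE m (l a) | m in conf_int mu c].

Definition Lstar {R : realType} {A : Type} (l : A -> bool -> R) (a : A) (mustar : R) : R :=
  bernE mustar (l a).

Definition Lpay {R : realType} {A : Type} (l : A -> bool -> R) (a : A)
    (mu c mustar b : R) : R :=
  Lstar l a mustar - bernE mustar (fun y : bool => b * ((y : nat)%:R - mu) + `|b| * c).

(* The expected loss [bernE m (l a)] is affine in [m] with slope
   [b = l a true - l a false], so over [mu - c, mu + c] it sweeps exactly the
   interval of radius [|b| c] around its value at [mu]: L^min and L^max are the
   two endpoints.  With the stake [b], the payment cancels the dependence on
   [mu^*] and L^pay is exactly the lower endpoint L^min. *)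
From HB Require Import structures.
From mathcomp Require Import all_boot all_order all_algebra.
From mathcomp Require Import all_classical all_reals.
From mathcomp Require Import ring lra.
Import Order.TTheory GRing.Theory Num.Theory.
Local Open Scope ring_scope.
Local Open Scope classical_set_scope.

Section ConfidenceInterval.
Variable R : realType.
Implicit Types (mu c m x r : R) (f : bool -> R).

Lemma conf_intP x r y : conf_int x r y = (`|y - x| <= r : Prop).
Proof. by rewrite /conf_int /= ler_distl. Qed.

Lemma conf_intE x r : conf_int x r = `[x - r, x + r].
Proof. by rewrite set_itvcc. Qed.

Lemma sup_conf_int x r : 0 <= r -> sup (conf_int x r) = x + r.
Proof. by move=> r0; rewrite conf_intE sup_itvcc //; lra. Qed.

Lemma inf_conf_int x r : 0 <= r -> inf (conf_int x r) = x - r.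
Proof. by move=> r0; rewrite conf_intE inf_itvcc //; lra. Qed.

Lemma bernE_sub m mu f : bernE m f - bernE mu f = (m - mu) * (f true - f false).
Proof. by rewrite /bernE; ring. Qed.

Lemma image_bernE_conf_int mu c f : 0 <= c ->
  [set bernE m f | m in conf_int mu c]
  = conf_int (bernE mu f) (`|f true - f false| * c).
Proof.
move=> c0; set d := f true - f false.
apply/seteqP; split => [_ [m + <-]|y].
  by rewrite !conf_intP bernE_sub normrM mulrC; apply: ler_wpM2l.
rewrite conf_intP => hy.
have [d0 | dN0] := eqVneq d 0.
  exists mu; first by rewrite conf_intP subrr normr0.
  by move: hy; rewrite d0 normr0 mul0r normr_le0 subr_eq0 => /eqP.
exists (mu + (y - bernE mu f) / d).
  rewrite conf_intP [mu + _]addrC addrK normrM normfV.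
  by rewrite ler_pdivrMr ?normr_gt0 // mulrC.
by rewrite -[LHS](subrK (bernE mu f)) bernE_sub [mu + _]addrC addrK mulfVK // subrK.
Qed.

End ConfidenceInterval.

Section Losses.
Variables (R : realType) (A : Type) (l : A -> bool -> R) (a : A).
Let d := l a true - l a false.

Lemma LmaxE mu c : 0 <= c -> Lmax l a mu c = bernE mu (l a) + `|d| * c.
Proof.
by move=> c0; rewrite /Lmax image_bernE_conf_int // sup_conf_int ?mulr_ge0.
Qed.

Lemma LminE mu c : 0 <= c -> Lmin l a mu c = bernE mu (l a) - `|d| * c.
Proof.
by move=> c0; rewrite /Lmin image_bernE_conf_int // inf_conf_int ?mulr_ge0.
Qed.

Lemma LpayE mu c mustar : Lpay l a mu c mustar d = bernE mu (l a) - `|d| * c.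
Proof. by rewrite /Lpay /Lstar /bernE /= /d; ring. Qed.

End Losses.

Theorem proposition2 (R : realType) (A : Type) (mu c mustar b : R)
  (l : A -> bool -> R) (a : A)
  (hmu : 0 < mu < 1) (hc : 0 < c < 1)
  (hsub : 0 <= mu - c /\ mu + c <= 1)
  (hstar : 0 <= mustar <= 1)
  (hb : b = l a true - l a false) :
  Lmin l a mu c <= Lpay l a mu c mustar b <= Lmax l a mu c.
Proof.
have c0 : 0 <= c by case/andP: hc => /ltW.
rewrite hb LpayE LminE // LmaxE // lexx /=.
have := mulr_ge0 (normr_ge0 (l a true - l a false)) c0; lra.
Qed.
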